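(* Let $p>3$ be a prime. Then $$\sum_{k=1}^{(p-3)/2}\frac{(-1)^k\binom{(p-1)/2}{k}\,(2H_{2k}-H_k)}{2k+1}\equiv -2(-1)^{(p-1)/2}q_p(2)^2\pmod p.$$
   Context: $H_n=\sum_{0<j\le n}1/j$ is the $n$-th harmonic number ($H_0=0$), and $q_p(2)=(2^{p-1}-1)/p$ is the Fermat quotient. Congruences between rationals modulo $p$ mean the difference is $p$ times a rational with denominator prime to $p$. *)

From HB Require Import structures.
From mathcomp Require Import all_boot all_order all_algebra.
Set Implicit Arguments. Unset Strict Implicit. Unset Printing Implicit Defensive.
Import Order.TTheory GRing.Theory Num.Theory.
Local Open Scope ring_scope.

Definition harm (n : nat) : rat := \sum_(1 <= j < n.+1) (j%:R)^-1.

Definition fermat_quot2 (p : nat) : rat := ((2%:R : rat) ^+ p.-1 - 1) / p%:R.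

Definition rat_cong (p : nat) (x y : rat) : Prop :=
  exists r : rat, x - y = p%:R * r /\ coprime p `|denq r|%N.

From HB Require Import structures.
From mathcomp Require Import all_boot all_order all_algebra.
From mathcomp Require Import cyclic.
From mathcomp Require Import ring zify.
Import Order.TTheory GRing.Theory Num.Theory.
Set Implicit Arguments. Unset Strict Implicit. Unset Printing Implicit Defensive.
Local Open Scope ring_scope.

(* Put p = 2n + 1 and O_k = 1 + 1/3 + ... + 1/(2k - 1), so that 2 H_{2k} - H_k = 2 O_k.
   The sum is then twice the alternating binomial transform of O_k / (2k + 1), minus
   its top term (-1)^n O_n / p.  Absorption and Pascal's rule give recurrences in n
   whose solutions are
     sum_k (-1)^k C(n, k) / (2k + 1)       = 4^n / ((2n + 1) C(2n, n)),
     sum_k (-1)^k C(n, k) O_k / (2k + 1)   = - H_n / 2 * 4^n / ((2n + 1) C(2n, n)).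
   Now 4^n = 1 + p q_p(2), C(2n, n) = C(p - 1, n) = (-1)^n (1 - p H_n) mod p^2,
   H_{p-1} = 0 mod p^2 (Wolstenholme) and 2 q_p(2) = - H_n mod p.  Inserting these
   expansions, the denominators p cancel and what is left is -2 (-1)^n q_p(2)^2. *)

(* [rat_cong p x y] says that (x - y) / p lies in [pintegral p]. *)
Definition pintegral (p : nat) : {pred rat} := [pred x : rat | coprime p `|denq x|].

Lemma pintegral_frac (p : nat) (a b : int) :
  coprime p `|b| -> a%:~R / b%:~R \in pintegral p.
Proof.
rewrite inE; case: divqP => [_|k x _]; first by rewrite coprimen1.
by rewrite abszM coprimeMr => /andP[].
Qed.

Fact pintegral_subring_closed p : subring_closed (pintegral p).
Proof.
have frac x : x = (numq x)%:~R / (denq x)%:~R by rewrite divq_num_den.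
have dx0 x : (denq x)%:~R != 0 :> rat by rewrite intr_eq0 denq_neq0.
split=> [|x y|x y]; rewrite ?inE ?coprimen1 // => hx hy.
  have -> : x - y = (numq x * denq y - numq y * denq x)%:~R / (denq x * denq y)%:~R.
    by rewrite {1}[x]frac {1}[y]frac rmorphB !rmorphM /=; field; rewrite !dx0.
  by apply: pintegral_frac; rewrite abszM coprimeMr hx hy.
have -> : x * y = (numq x * numq y)%:~R / (denq x * denq y)%:~R.
  by rewrite {1}[x]frac {1}[y]frac !rmorphM /=; field; rewrite !dx0.
by apply: pintegral_frac; rewrite abszM coprimeMr hx hy.
Qed.

HB.instance Definition _ (p : nat) :=
  GRing.isSubringClosed.Build rat (pintegral p) (pintegral_subring_closed p).

Lemma pintegral_natV p k : coprime p k -> k%:R^-1 \in pintegral p.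
Proof. by move=> hk; rewrite -[k%:R]/(k%:~R) -div1r -[1]/(1%:~R); apply: pintegral_frac. Qed.

Section BinomialTransform.
Variable R : comRingType.
Implicit Types (f g : nat -> R) (n : nat).

Definition bintrans n f : R := \sum_(0 <= k < n.+1) (-1) ^+ k * ('C(n, k))%:R * f k.

Lemma eq_bintrans n f g : f =1 g -> bintrans n f = bintrans n g.
Proof. by move=> fg; apply: eq_bigr => k _; rewrite fg. Qed.

Lemma bintransD n f g : bintrans n (fun k => f k + g k) = bintrans n f + bintrans n g.
Proof. by rewrite -big_split; apply: eq_bigr => k _; rewrite mulrDr. Qed.

Lemma bintransZ n c f : bintrans n (fun k => c * f k) = c * bintrans n f.
Proof. by rewrite mulr_sumr; apply: eq_bigr => k _; ring. Qed.

Lemma bintransB n f g : bintrans n (fun k => f k - g k) = bintrans n f - bintrans n g.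
Proof.
rewrite -[bintrans n g]mul1r -mulNr -bintransZ -bintransD.
by apply: eq_bintrans => k; ring.
Qed.

Lemma bintransS n f : bintrans n.+1 f = bintrans n f - bintrans n (fun k => f k.+1).
Proof.
have extend : \sum_(0 <= k < n) (-1) ^+ k.+1 * ('C(n, k.+1))%:R * f k.+1
    = \sum_(0 <= k < n.+1) (-1) ^+ k.+1 * ('C(n, k.+1))%:R * f k.+1.
  by rewrite big_nat_recr //= bin_small // mulr0 mul0r addr0.
rewrite /bintrans big_nat_recl // [X in _ = X - _]big_nat_recl // extend !bin0.
rewrite -addrA -sumrB; congr (_ + _).
by apply: eq_bigr => k _; rewrite binS natrD exprS; ring.
Qed.

Lemma bintrans_cst n c : bintrans n.+1 (fun=> c) = 0.
Proof. by rewrite bintransS subrr. Qed.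

Lemma bintrans_mulk n f :
  bintrans n.+1 (fun k => k%:R * f k) = - (n.+1)%:R * bintrans n (fun k => f k.+1).
Proof.
rewrite /bintrans big_nat_recl // mul0r mulr0 add0r mulr_sumr.
apply: eq_bigr => k _.
have absorb : ('C(n.+1, k.+1))%:R * (k.+1)%:R = (n.+1)%:R * ('C(n, k))%:R :> R.
  by rewrite -!natrM mulnC -mul_bin_diag.
rewrite exprS; transitivity (- (-1) ^+ k * (('C(n.+1, k.+1))%:R * (k.+1)%:R) * f k.+1).
  by ring.
by rewrite absorb; ring.
Qed.

Lemma bintrans_psum n g :
  bintrans n.+1 (fun j => \sum_(0 <= i < j) g i) = - bintrans n g.
Proof.
rewrite bintransS -bintransB -[bintrans n g]mul1r -mulNr -bintransZ.
by apply: eq_bintrans => k; rewrite big_nat_recr //=; ring.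
Qed.

End BinomialTransform.

Definition oddinv (k : nat) : rat := ((2 * k + 1)%N%:R)^-1.
Definition oddharm (k : nat) : rat := \sum_(0 <= i < k) oddinv i.

Lemma harmS n : harm n.+1 = harm n + (n.+1)%:R^-1.
Proof. by rewrite /harm big_nat_recr. Qed.

Lemma alt_harm m :
  \sum_(1 <= k < (2 * m).+1) (-1) ^+ k.-1 / k%:R = harm (2 * m) - harm m.
Proof.
elim: m => [|m IH]; first by rewrite big_geq // /harm big_geq // subrr.
have double : (2 * m.+1 = (2 * m).+2)%N by rewrite mulnS.
have half : 2 * ((2 * m).+2)%:R^-1 = (m.+1)%:R^-1 :> rat.
  by rewrite -double natrM invfM mulrA mulfV ?mul1r // pnatr_eq0.
rewrite double !harmS (big_nat_recr (2 * m).+2) // (big_nat_recr (2 * m).+1) //= IH.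
by rewrite -half exprS -signr_odd oddM /= expr0; ring.
Qed.

Lemma natr_oddS k : ((2 * k + 1)%N%:R : rat) != 0.
Proof. by rewrite pnatr_eq0 addn1. Qed.

Lemma oddharm_harm k : 2 * harm (2 * k) - harm k = 2 * oddharm k.
Proof.
elim: k => [|k IH]; first by rewrite /harm /oddharm !big_geq // mulr0 subrr mulr0.
have double : (2 * k.+1 = (2 * k).+2)%N by rewrite mulnS.
have half : 2 * ((2 * k).+2)%:R^-1 = (k.+1)%:R^-1 :> rat.
  by rewrite -double natrM invfM mulrA mulfV ?mul1r // pnatr_eq0.
rewrite double !harmS /oddharm big_nat_recr //= -/(oddharm k).
transitivity (2 * harm (2 * k) - harm k + 2 * oddinv k
              + (2 * ((2 * k).+2)%:R^-1 - (k.+1)%:R^-1)).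
  by rewrite /oddinv addn1; ring.
by rewrite IH half subrr addr0 mulrDr.
Qed.

Lemma oddinv_mulk k : 2 * (k%:R * oddinv k) = 1 - oddinv k.
Proof. by rewrite /oddinv; have := natr_oddS k; rewrite natrD natrM => nz; field. Qed.

Lemma bintrans_oddinvS n :
  bintrans n.+1 oddinv * (2 * n.+1).+1%:R = bintrans n oddinv * (2 * n.+1)%:R.
Proof.
set c := bintrans n oddinv; set c' := bintrans n.+1 oddinv.
have shift : bintrans n (fun k => oddinv k.+1) = c - c' by rewrite /c' bintransS -/c; ring.
have absorb : 2 * (- (n.+1)%:R * (c - c')) = - c'.
  rewrite -shift -bintrans_mulk -bintransZ (eq_bintrans _ oddinv_mulk).
  by rewrite bintransB bintrans_cst sub0r.
have combine : c' * (2 * n.+1).+1%:R - c * (2 * n.+1)%:R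
         = c' + 2 * (- (n.+1)%:R * (c - c')) by ring.
by apply/eqP; rewrite -subr_eq0 combine absorb subrr.
Qed.

Lemma mul_central_binS n : (n.+1 * 'C(2 * n.+1, n.+1) = 2 * (2 * n).+1 * 'C(2 * n, n))%N.
Proof.
have double : (2 * n.+1 = (2 * n).+2)%N by rewrite mulnS.
have sym : 'C((2 * n).+1, n.+1) = 'C((2 * n).+1, n).
  by rewrite -bin_sub; [congr 'C(_, _) | ]; lia.
rewrite double -mul_bin_diag -mulnA [((2 * n).+1 * _)%N](mul_bin_diag (2 * n).+1) /=.
by rewrite sym -double mulnA.
Qed.

Lemma bintrans_oddinv n :
  bintrans n oddinv * (2 * n).+1%:R * ('C(2 * n, n))%:R = 4 ^+ n.
Proof.
elim: n => [|n IH].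
  by rewrite /bintrans big_nat1 /oddinv muln0 add0n bin0 expr0 invr1 !mulr1.
rewrite exprS -IH bintrans_oddinvS.
transitivity (2 * bintrans n oddinv * (n.+1 * 'C(2 * n.+1, n.+1))%N%:R).
  by rewrite natrM; ring.
by rewrite mul_central_binS !natrM; ring.
Qed.

Lemma bintrans_oddharm n :
  bintrans n (fun k => oddinv k * oddharm k) = - bintrans n oddinv * harm n / 2.
Proof.
elim: n => [|n IH].
  by rewrite /bintrans /oddharm /harm !big_nat1 !big_geq // !mulr0 mul0r.
set t := bintrans n (fun k => oddinv k * oddharm k).
set t' := bintrans n.+1 (fun k => oddinv k * oddharm k).
set c := bintrans n oddinv; set c' := bintrans n.+1 oddinv.
have shift : bintrans n (fun k => oddinv k.+1 * oddharm k.+1) = t - t'.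
  by rewrite /t' bintransS -/t; ring.
have absorb : 2 * (- (n.+1)%:R * (t - t')) = - c - t'.
  rewrite -shift -(bintrans_mulk n (fun k => oddinv k * oddharm k)) -bintransZ.
  rewrite (eq_bintrans _ (_ : _ =1 fun k => oddharm k - oddinv k * oddharm k)); last first.
    move=> k; transitivity (2 * (k%:R * oddinv k) * oddharm k); first by ring.
    by rewrite oddinv_mulk mulrBl mul1r.
  by rewrite (bintransB _ oddharm) -/t' [bintrans _ oddharm]bintrans_psum.
have t'S : t' * (2 * n.+1).+1%:R = t * (2 * n.+1)%:R - c.
  have combine : t' * (2 * n.+1).+1%:R - (t * (2 * n.+1)%:R - c)
           = t' + c + 2 * (- (n.+1)%:R * (t - t')) by ring.
  by apply/eqP; rewrite -subr_eq0 combine absorb addrA addrK subrr.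
apply: (@mulIf _ (2 * n.+1).+1%:R); first by rewrite pnatr_eq0.
rewrite t'S /t IH -/c harmS.
transitivity (- (c' * (2 * n.+1).+1%:R) * (harm n + (n.+1)%:R^-1) / 2); last by ring.
rewrite bintrans_oddinvS -/c; field.
by rewrite addrC natr1 pnatr_eq0.
Qed.

Lemma sum_sqr m : (6 * \sum_(1 <= k < m.+1) k ^ 2 = m * m.+1 * (2 * m).+1)%N.
Proof.
elim: m => [|m IH]; first by rewrite big_geq.
by rewrite big_nat_recr //= mulnDr IH; nia.
Qed.

Section PrimeModulus.
Variable p : nat.
Hypothesis p_prime : prime p.

Lemma natr_p_neq0 : p%:R != 0 :> rat.
Proof. by rewrite pnatr_eq0 -lt0n prime_gt0. Qed.

Lemma coprime_ltn k : (0 < k < p)%N -> coprime p k.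
Proof. by case/andP=> k0 kp; rewrite prime_coprime // gtnNdvd. Qed.

Definition inv_modp (k : nat) : nat := k ^ p.-2 %% p.

Lemma mul_inv_modp k : (0 < k < p)%N -> (k * inv_modp k %% p = 1)%N.
Proof.
move=> kp; rewrite modnMmr -expnS -(modn_small (prime_gt1 p_prime)).
have -> : p.-2.+1 = totient p by rewrite totient_prime //; case: p p_prime => [|[]].
by apply: Euler_exp_totient; rewrite coprime_sym coprime_ltn.
Qed.

Lemma inv_modp_range k : (0 < k < p)%N -> (0 < inv_modp k < p)%N.
Proof.
move=> kp; rewrite {2}/inv_modp ltn_mod (prime_gt0 p_prime) andbT lt0n.
by apply/eqP => g0; move: (mul_inv_modp kp); rewrite g0 muln0 mod0n.
Qed.

Lemma inv_modpK k : (0 < k < p)%N -> inv_modp (inv_modp k) = k.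
Proof.
move=> kp; have gp := inv_modp_range kp.
have /andP[_ hp] := inv_modp_range gp; have /andP[_ kp'] := kp.
rewrite -(modn_small hp) -[inv_modp (inv_modp k)]muln1 -(mul_inv_modp kp).
by rewrite modnMmr mulnC -mulnA -modnMmr mul_inv_modp // muln1 modn_small.
Qed.

Lemma sum_inv_modp (F : nat -> rat) :
  \sum_(1 <= k < p) F (inv_modp k) = \sum_(1 <= k < p) F k.
Proof.
rewrite -(big_map inv_modp xpredT F); apply: perm_big.
have range k : (k \in index_iota 1 p) = (0 < k < p)%N by rewrite mem_index_iota.
apply: uniq_perm; rewrite ?iota_uniq //.
  rewrite map_inj_in_uniq ?iota_uniq // => x y; rewrite !range => xp yp e.
  by rewrite -(inv_modpK xp) e inv_modpK.
move=> y; rewrite range; apply/mapP/idP => [[x]|yp].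
  by rewrite range => xp ->; apply: inv_modp_range.
by exists (inv_modp y); rewrite ?range ?inv_modp_range ?inv_modpK.
Qed.

Lemma pintegral_invn k : (0 < k < p)%N -> k%:R^-1 \in pintegral p.
Proof. by move=> kp; apply/pintegral_natV/coprime_ltn. Qed.

Lemma harm_pintegral j : (j < p)%N -> harm j \in pintegral p.
Proof.
move=> jp; rewrite /harm big_nat_cond; apply: rpred_sum => k /andP[/andP[k0 kj] _].
by apply: pintegral_invn; rewrite k0 (leq_trans kj jp).
Qed.

Lemma sign_bin_predS j : (j < p.-1)%N ->
  (-1) ^+ j.+1 * ('C(p.-1, j.+1))%:R
  = (-1) ^+ j * ('C(p.-1, j))%:R * (1 - p%:R / (j.+1)%:R) :> rat.
Proof.
move=> jp; have pred_p : (p.-1)%:R = p%:R - 1 :> rat.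
  by rewrite -[p in RHS](prednK (prime_gt0 p_prime)) -natr1 addrK.
have := mul_bin_left p.-1 j; move=> /(congr1 (fun m : nat => m%:R : rat)).
rewrite !natrM natrB ?(ltnW jp) // pred_p -natr1 exprS => absorb.
have j1 : j%:R + 1 != 0 :> rat by rewrite natr1 pnatr_eq0.
apply: (mulfI j1); rewrite mulrCA absorb; field.
by rewrite natr1 pnatr_eq0.
Qed.

Lemma bin_pred_expansion j : (j < p)%N ->
  ((-1) ^+ j * ('C(p.-1, j))%:R - 1 + p%:R * harm j) / p%:R ^+ 2 \in pintegral p.
Proof.
have p0 := natr_p_neq0.
elim: j => [|j IH] jp; first by rewrite /harm big_geq // bin0 expr0 mulr0 mul1r addr0 subrr mul0r rpred0.
have jp' : (j < p.-1)%N by rewrite -ltnS prednK ?prime_gt0.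
set b := (_ / _) in IH.
have -> : ((-1) ^+ j.+1 * ('C(p.-1, j.+1))%:R - 1 + p%:R * harm j.+1) / p%:R ^+ 2
        = b + (harm j - p%:R * b) / (j.+1)%:R.
  by rewrite sign_bin_predS // harmS /b; field; rewrite p0 addrC natr1 pnatr_eq0.
have bS : b \in pintegral p by apply/IH/ltnW.
clearbody b; have jp1 : (j < p)%N by apply: ltnW.
by rewrite rpredD ?rpredM ?rpredB ?rpredM ?rpred_nat ?harm_pintegral ?pintegral_invn.
Qed.

Lemma sign_bin_pred_mod j : (j < p)%N ->
  ((-1) ^+ j * ('C(p.-1, j))%:R - 1) / p%:R \in pintegral p.
Proof.
move=> jp; have p0 := natr_p_neq0.
have -> : ((-1) ^+ j * ('C(p.-1, j))%:R - 1) / p%:R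
   = p%:R * (((-1) ^+ j * ('C(p.-1, j))%:R - 1 + p%:R * harm j) / p%:R ^+ 2) - harm j.
  by field.
by rewrite rpredB ?harm_pintegral // rpredM ?rpred_nat // bin_pred_expansion.
Qed.

Lemma coprime_bin_pred j : (j <= p.-1)%N -> coprime p 'C(p.-1, j).
Proof.
move=> jp; have coprime_fact : coprime p (p.-1)`!.
  have wilson : (p %| (p.-1)`!.+1)%N by rewrite -Wilson ?prime_gt1.
  exact: coprime_dvdl wilson (coprimeSn _).
by apply: coprime_dvdr coprime_fact; rewrite -(bin_fact jp) dvdn_mulr.
Qed.

(* 1/k + 1/(p - k) = - p (k^-1 mod p)^2 mod p^2; summing over k and permuting by
   k |-> k^-1 mod p gives 2 H_{p-1} = - p (1^2 + ... + (p - 1)^2) mod p^2. *)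
Lemma inv_add_inv_sub k : (0 < k < p)%N ->
  (k%:R^-1 + ((p - k)%N)%:R^-1 + p%:R * (inv_modp k)%:R ^+ 2) / p%:R ^+ 2
    \in pintegral p.
Proof.
move=> kp; have /andP[k0 kp'] := kp.
have pk : (0 < p - k < p)%N by rewrite subn_gt0 kp' ltn_subrL k0 prime_gt0.
have k0' : k%:R != 0 :> rat by rewrite pnatr_eq0 -lt0n.
have pk0 : p%:R - k%:R != 0 :> rat.
  by rewrite -natrB ?(ltnW kp') // pnatr_eq0 -lt0n; case/andP: pk.
have p0 := natr_p_neq0.
move: (inv_modp k) (mul_inv_modp kp) => g kg1.
have kg : k%:R * g%:R = (k * g %/ p)%N%:R * p%:R + 1 :> rat.
  by rewrite -!natrM natr1 {1}(divn_eq (k * g) p) kg1 addn1.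
move: (k * g %/ p)%N kg => m kg.
have -> : (k%:R^-1 + ((p - k)%N)%:R^-1 + p%:R * g%:R ^+ 2) / p%:R ^+ 2
    = k%:R^-1 ^+ 2 * (((p - k)%N)%:R^-1 + 2 * m%:R + p%:R * m%:R ^+ 2) :> rat.
  have -> : g%:R = (m%:R * p%:R + 1) / k%:R :> rat by rewrite -kg mulrC mulKf.
  by rewrite natrB ?(ltnW kp') //; field; rewrite k0' pk0 p0.
by rewrite rpredM ?rpredX ?rpredD ?rpredM ?rpred_nat ?pintegral_invn.
Qed.

Theorem wolstenholme : (3 < p)%N -> harm p.-1 / p%:R ^+ 2 \in pintegral p.
Proof.
move=> p3; have p0 := natr_p_neq0.
have harm_pred : harm p.-1 = \sum_(1 <= k < p) k%:R^-1.
  by rewrite /harm prednK ?prime_gt0.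
have reflect_sum : \sum_(1 <= k < p) ((p - k)%N)%:R^-1 = harm p.-1.
  by rewrite harm_pred big_nat_rev; apply: eq_big_nat => k kp; congr (_%:R^-1); lia.
have sum_sqr_inv : \sum_(1 <= k < p) (inv_modp k)%:R ^+ 2
                  = p%:R * (p.-1 * (2 * p.-1).+1)%N%:R / 6 :> rat.
  rewrite (sum_inv_modp (fun k => k%:R ^+ 2)).
  have := congr1 (fun m : nat => m%:R : rat) (sum_sqr p.-1).
  rewrite /= prednK ?prime_gt0 // !natrM natr_sum => e.
  apply: (mulfI (_ : 6 != 0)) => //.
  by rewrite -(eq_bigr _ (fun i _ => natrX _ i 2)) e; field.
pose T : rat := \sum_(1 <= k < p)
  (k%:R^-1 + ((p - k)%N)%:R^-1 + p%:R * (inv_modp k)%:R ^+ 2) / p%:R ^+ 2.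
have T_pint : T \in pintegral p.
  by rewrite /T big_nat_cond; apply: rpred_sum => k /andP[kp _]; apply: inv_add_inv_sub.
have -> : harm p.-1 / p%:R ^+ 2 = (T - (p.-1 * (2 * p.-1).+1)%N%:R / 6) / 2.
  rewrite /T -mulr_suml !big_split /= reflect_sum -harm_pred -mulr_sumr sum_sqr_inv.
  by field.
have p2 : (2 < p)%N by apply: ltnW.
have coprime_p2 : coprime p 2 by rewrite coprime_ltn.
have coprime_p6 : coprime p 6 by rewrite (_ : 6 = 2 * 3)%N // coprimeMr coprime_p2 coprime_ltn.
by rewrite rpredM ?rpredB ?rpredM ?rpred_nat ?pintegral_natV.
Qed.

Lemma bin_prime_div k : (0 < k)%N ->
  ('C(p, k))%:R / p%:R = ('C(p.-1, k.-1))%:R / k%:R :> rat.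
Proof.
move=> k0; have p0 := natr_p_neq0.
have := mul_bin_diag p k.-1; rewrite prednK // => /(congr1 (fun m : nat => m%:R : rat)).
rewrite !natrM => e; have k0' : k%:R != 0 :> rat by rewrite pnatr_eq0 -lt0n.
have -> : ('C(p, k))%:R = p%:R * ('C(p.-1, k.-1))%:R / k%:R :> rat.
  by rewrite e mulrC mulKf.
by field; rewrite p0 k0'.
Qed.

Lemma two_fermat_quot2 :
  2 * fermat_quot2 p = \sum_(1 <= k < p) ('C(p.-1, k.-1))%:R / k%:R.
Proof.
have p_gt0 := prime_gt0 p_prime; have p0 := natr_p_neq0.
have binom : (2 : rat) ^+ p = \sum_(0 <= k < p.+1) ('C(p, k))%:R.
  by rewrite -[2]/(1 + 1 : rat) exprD1n big_mkord; apply: eq_bigr => i _; rewrite expr1n.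
rewrite big_ltn // big_nat_recr // bin0 binn -[in LHS](prednK p_gt0) exprS in binom.
rewrite -(eq_big_nat _ _ (fun k kp => bin_prime_div (proj1 (andP kp)))).
have sum_bin : \sum_(1 <= i < p) ('C(p, i))%:R = 2 * 2 ^+ p.-1 - 2 :> rat.
  by rewrite binom /=; ring.
by rewrite -mulr_suml sum_bin /fermat_quot2; field.
Qed.

Lemma fermat_quot2_pintegral : (2 < p)%N -> fermat_quot2 p \in pintegral p.
Proof.
move=> p2; rewrite -[fermat_quot2 p]mul1r -(mulVf (_ : 2 != 0)) // -mulrA.
rewrite two_fermat_quot2 rpredM ?pintegral_invn // big_nat_cond.
apply: rpred_sum => k /andP[/andP[k0 kp] _].
by rewrite rpredM ?rpred_nat ?pintegral_invn ?k0.
Qed.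

Lemma fermat_quot2_harm n : (3 < p)%N -> p = (2 * n).+1 ->
  (2 * fermat_quot2 p + harm n) / p%:R \in pintegral p.
Proof.
move=> p3 pn; have p0 := natr_p_neq0.
pose term k : rat := (-1) ^+ k.-1 * (((-1) ^+ k.-1 * ('C(p.-1, k.-1))%:R - 1) / p%:R) / k%:R.
have termE k : term k = (('C(p.-1, k.-1))%:R / k%:R - (-1) ^+ k.-1 / k%:R) / p%:R.
  by rewrite /term -signr_odd; case: odd; rewrite ?expr0 ?expr1; ring.
have alt : \sum_(1 <= k < p) (-1) ^+ k.-1 / k%:R = harm p.-1 - harm n.
  by rewrite pn alt_harm.
have -> : (2 * fermat_quot2 p + harm n) / p%:R
        = \sum_(1 <= k < p) term k + p%:R * (harm p.-1 / p%:R ^+ 2).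
  rewrite (eq_bigr _ (fun k _ => termE k)) -mulr_suml sumrB alt two_fermat_quot2.
  by field.
apply: rpredD; last by rewrite rpredM ?rpred_nat ?wolstenholme.
rewrite big_nat_cond; apply: rpred_sum => k /andP[/andP[k0 kp] _].
rewrite rpredM ?pintegral_invn ?k0 // rpredMsign sign_bin_pred_mod //.
by rewrite (leq_ltn_trans (leq_pred k)).
Qed.

End PrimeModulus.

Lemma inner_sum_bintrans n : (0 < n)%N ->
  \sum_(1 <= k < n)
      (-1) ^+ k * ('C(n, k))%:R * (2 * harm (2 * k) - harm k) / ((2 * k + 1)%N)%:R
  = 2 * (bintrans n (fun k => oddinv k * oddharm k) - (-1) ^+ n * oddinv n * oddharm n).
Proof.
move=> n0; rewrite /bintrans (big_ltn (ltn0Sn n)) (big_nat_recr n 1) //= binn mulr1.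
have -> : oddharm 0 = 0 by rewrite /oddharm big_geq.
rewrite mulr0 add0r mulrA addrK mulr_sumr.
by apply: eq_bigr => k _; rewrite oddharm_harm /oddinv; ring.
Qed.

(* With H = P t - 2 q and (-1)^m C = 1 - P H + P^2 b, every denominator P cancels. *)
Lemma congruence_identity (m : nat) (P C c H Hd O q W b t : rat) :
  P != 0 -> C != 0 -> c * P * C = 1 + P * q -> 2 * O = 2 * Hd - H ->
  Hd = P ^+ 2 * W -> (-1) ^+ m * C = 1 - P * H + P ^+ 2 * b -> 2 * q + H = P * t ->
  2 * (- c * H / 2 - (-1) ^+ m * P^-1 * O) - (- 2 * (-1) ^+ m * q ^+ 2)
  = P * ((3 * q * t - P * t ^+ 2 + b * H - 2 * q ^+ 2 * H + 2 * P * q ^+ 2 * b) / C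
         - 2 * (-1) ^+ m * W).
Proof.
move=> P0 C0 cE OE HdE CE tE.
have -> : c = (1 + P * q) / (P * C) by rewrite -cE; field; rewrite P0 C0.
have -> : O = Hd - H / 2 by rewrite -[O](mulKf (_ : 2 != 0)) // OE; field.
have eH : H = P * t - 2 * q by rewrite -tE; ring.
rewrite HdE; move: C0 CE; rewrite eH -signr_odd; case: odd => /=.
- rewrite expr1 mulN1r => C0 /eqP; rewrite eqr_oppLR => /eqP CE.
  by rewrite CE oppr_eq0 in C0 *; field; rewrite P0 C0.
- by rewrite expr0 mul1r => C0 CE; rewrite CE in C0 *; field; rewrite P0 C0.
Qed.

Lemma rat_cong_expansions (p m C : nat) (c H Hd O q : rat) :
  prime p -> coprime p C -> q \in pintegral p ->
  Hd / p%:R ^+ 2 \in pintegral p ->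
  ((-1) ^+ m * C%:R - 1 + p%:R * H) / p%:R ^+ 2 \in pintegral p ->
  (2 * q + H) / p%:R \in pintegral p ->
  c * p%:R * C%:R = 1 + p%:R * q -> 2 * O = 2 * Hd - H ->
  rat_cong p (2 * (- c * H / 2 - (-1) ^+ m * p%:R^-1 * O)) (- 2 * (-1) ^+ m * q ^+ 2).
Proof.
move=> p_prime coprime_pC q_pint W_pint b_pint t_pint cE OE.
have P0 := natr_p_neq0 p_prime.
have C0 : C%:R != 0 :> rat.
  by rewrite pnatr_eq0; apply: contraTneq coprime_pC => ->; rewrite prime_coprime ?dvdn0.
pose W := Hd / p%:R ^+ 2; pose b := ((-1) ^+ m * C%:R - 1 + p%:R * H) / p%:R ^+ 2.
pose t := (2 * q + H) / p%:R.
have HdE : Hd = p%:R ^+ 2 * W by rewrite /W; field.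
have CE : (-1) ^+ m * C%:R = 1 - p%:R * H + p%:R ^+ 2 * b by rewrite /b; field.
have tE : 2 * q + H = p%:R * t by rewrite /t; field.
rewrite -/W in W_pint; rewrite -/b in b_pint; rewrite -/t in t_pint; clearbody W b t.
have H_pint : H \in pintegral p.
  by rewrite (_ : H = p%:R * t - 2 * q) ?rpredB ?rpredM ?rpred_nat // -tE; ring.
have Cinv_pint : C%:R^-1 \in pintegral p by apply: pintegral_natV.
exists ((3 * q * t - p%:R * t ^+ 2 + b * H - 2 * q ^+ 2 * H + 2 * p%:R * q ^+ 2 * b)
        / C%:R - 2 * (-1) ^+ m * W).
split; first exact: (congruence_identity P0 C0 cE OE HdE CE tE).
rewrite -[coprime _ _]/(_ \in pintegral p).
move: (C%:R^-1) Cinv_pint => Cinv Cinv_pint.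
by rewrite !(rpred_nat, rpred_sign, rpredB, rpredD, rpredM, rpredX).
Qed.

Theorem mainTheorem7 (p : nat) (hp : prime p) (hp3 : (3 < p)%N) :
  rat_cong p
    (\sum_(1 <= k < ((p - 3) %/ 2).+1)
        (-1) ^+ k * ('C((p - 1) %/ 2, k))%:R * (2 * harm (2 * k) - harm k)
          / ((2 * k + 1)%N)%:R)
    (- 2 * (-1) ^+ ((p - 1) %/ 2) * fermat_quot2 p ^+ 2).
Proof.
have [n pn] : exists n, p = (2 * n).+1.
  have odd_p : odd p by apply/negPn/negP => /(prime_oddPn hp) p2; rewrite p2 in hp3.
  by exists p./2; rewrite -{1}(odd_double_half p) odd_p add1n -mul2n.
have -> : ((p - 3) %/ 2).+1%N = n by rewrite pn; lia.
have -> : ((p - 1) %/ 2)%N = n by rewrite pn; lia.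
have pred_p : p.-1 = (2 * n)%N by rewrite pn.
have n_gt0 : (0 < n)%N by rewrite lt0n; apply/eqP=> n0; rewrite pn n0 in hp3.
rewrite inner_sum_bintrans // bintrans_oddharm (_ : oddinv n = p%:R^-1); last first.
  by rewrite /oddinv addn1 -pn.
apply: (rat_cong_expansions (C := 'C(2 * n, n)) (Hd := harm (2 * n))) => //.
- by rewrite -pred_p coprime_bin_pred // pred_p leq_pmull.
- by rewrite fermat_quot2_pintegral // ltnW.
- by rewrite -pred_p wolstenholme.
- by rewrite -pred_p bin_pred_expansion // pn ltnS leq_pmull.
- exact: fermat_quot2_harm.
- have := bintrans_oddinv n; rewrite -pn => ->.
  by rewrite /fermat_quot2 pred_p exprM (_ : 2 ^+ 2 = 4) //; field; exact: natr_p_neq0.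
- exact: esym (oddharm_harm n).
Qed.
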